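(* Let $\mathcal F$ be a proper filter on $\omega$ and consider the game $\mathfrak G(\mathcal F,\omega,\mathcal F^+)$. Then (1) player I has a winning strategy if and only if $\mathcal F$ is not weakly Ramsey; (2) player II has a winning strategy if and only if $\mathcal F$ is $\omega$-$+$-diagonalizable.
   Context: A filter on $\omega$ is a family $\mathcal F\subseteq\mathcal P(\omega)$ closed under finite intersections and supersets and containing all cofinite sets; it is proper if all its members are infinite. $\mathcal F^+=\{X\subseteq\omega:\omega\setminus X\notin\mathcal F\}$. $X\subseteq^*Y$ means $X\setminus Y$ is finite. Game $\mathfrak G(\mathcal X,\omega,\mathcal Z)$: at each stage $k\in\omega$, player I chooses $X_k\in\mathcal X$ and player II responds with $n_k\in X_k$; II wins if $\{n_k:k\in\omega\}\in\mathcal Z$, otherwise I wins. A tree is a set $T$ of finite sequences of natural numbers containing the empty sequence and closed under initial segments; it is an $\mathcal F$-tree if for each $\bar s\in T$ there is $X_{\bar s}\in\mathcal F$ with $\bar s^\frown n\in T$ for all $n\in X_{\bar s}$. A branch is an infinite sequence all of whose finite initial segments lie in $T$; it is ''in'' a family if its set of values belongs to that family. $\mathcal F$ is weakly Ramsey if every $\mathcal F$-tree has a branch in $\mathcal F^+$. $\mathcal F$ is $\omega$-$+$-diagonalizable if there are $X_n\in\mathcal F^+$ ($n\in\omega$) such that for every $Y\in\mathcal F$ there is $n$ with $X_n\subseteq^*Y$. *)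

From Stdlib Require Import List Arith.
Import ListNotations.

Definition nset := nat -> Prop.
Definition family := nset -> Prop.

Definition finite_set (X : nset) : Prop := exists N, forall m, X m -> m < N.
Definition compl (X : nset) : nset := fun m => ~ X m.
Definition infinite_set (X : nset) : Prop := forall N, exists m, N <= m /\ X m.

Definition is_filter (F : family) : Prop :=
  (forall X Y, F X -> F Y -> F (fun m => X m /\ Y m)) /\
  (forall X Y, F X -> (forall m, X m -> Y m) -> F Y) /\
  (forall X, finite_set (compl X) -> F X).

Definition proper_filter (F : family) : Prop :=
  is_filter F /\ forall X, F X -> infinite_set X.

Definition Fplus (F : family) : family := fun X => ~ F (compl X).

Definition almost_sub (X Y : nset) : Prop :=
  finite_set (fun m => X m /\ ~ Y m).

Definition prefix {A} (f : nat -> A) (k : nat) : list A := map f (seq 0 k).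
Definition range (f : nat -> nat) : nset := fun m => exists k, f k = m.

(* Game G(Xf, omega, Z): I plays X_k in Xf, II answers n_k in X_k;
   II wins iff {n_k} in Z. A strategy for I maps the history of II's
   moves (which determines I's own previous moves) to I's next move. *)
Definition I_has_winning_strategy (Xf Z : family) : Prop :=
  exists sigma : list nat -> nset,
    (forall h, Xf (sigma h)) /\
    forall f : nat -> nat, (forall k, sigma (prefix f k) (f k)) -> ~ Z (range f).

(* A strategy for II maps the history of I's previous moves and I's current
   move to II's answer, which must be legal (an element of the current move). *)
Definition II_has_winning_strategy (Xf Z : family) : Prop :=
  exists tau : list nset -> nset -> nat,
    (forall h X, Forall Xf h -> Xf X -> X (tau h X)) /\
    forall Xs : nat -> nset, (forall k, Xf (Xs k)) ->
      Z (range (fun k => tau (prefix Xs k) (Xs k))).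

Definition is_tree (T : list nat -> Prop) : Prop :=
  T [] /\ forall s t, T (s ++ t) -> T s.

Definition is_F_tree (F : family) (T : list nat -> Prop) : Prop :=
  is_tree T /\ forall s, T s -> exists X, F X /\ forall n, X n -> T (s ++ [n]).

Definition is_branch (T : list nat -> Prop) (f : nat -> nat) : Prop :=
  forall k, T (prefix f k).

Definition weakly_Ramsey (F : family) : Prop :=
  forall T, is_F_tree F T -> exists f, is_branch T f /\ Fplus F (range f).

Definition omega_plus_diagonalizable (F : family) : Prop :=
  exists Xs : nat -> nset, (forall n, Fplus F (Xs n)) /\
    forall Y, F Y -> exists n, almost_sub (Xs n) Y.

From Stdlib Require Import List Arith Lia Cantor Classical IndefiniteDescription.
Import ListNotations.

(* (1) The plays consistent with a strategy sigma of I form an F-tree whose branches are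
   exactly those plays, and conversely choosing a witness X_s at each node of an F-tree is
   a strategy for I whose plays are branches; so "I wins" and "some F-tree has no branch
   in F^+" say the same thing.
   (2) Given a diagonalizing family (X_n), II answers at stage <n, N> with an element of
   X_n above N; the resulting set meets every X_n unboundedly, so no set of F can contain
   its complement.  Conversely, from a winning strategy tau the sets of possible answers of
   tau at the countably many positions reachable from finite sequences of answers
   diagonalize F: otherwise one Y in F avoids an answer at each of these positions, and
   following those answers gives a play whose range misses Y. *)

Lemma prefix_S {A} (f : nat -> A) k : prefix f (S k) = prefix f k ++ [f k].
Proof. unfold prefix. rewrite seq_S, map_app. reflexivity. Qed.

Lemma prefix_length {A} (f : nat -> A) k : length (prefix f k) = k.
Proof. unfold prefix. rewrite length_map, length_seq. reflexivity. Qed.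

Fixpoint prefix_recursion {A} (c : list A -> A) (k : nat) : list A :=
  match k with
  | 0 => []
  | S k => prefix_recursion c k ++ [c (prefix_recursion c k)]
  end.

Lemma exists_prefix_recursive {A} (c : list A -> A) :
  exists g : nat -> A, forall k, g k = c (prefix g k).
Proof.
  set (g := fun k => c (prefix_recursion c k)).
  assert (Hpre : forall k, prefix g k = prefix_recursion c k).
  { induction k as [|k IH]; [reflexivity|]. rewrite prefix_S, IH. reflexivity. }
  exists g. intros k. rewrite Hpre. reflexivity.
Qed.

Fixpoint list_code (s : list nat) : nat :=
  match s with
  | [] => 0
  | a :: s => S (to_nat (a, list_code s))
  end.

(* The first argument is fuel; [list_code s <= fuel] suffices to decode [list_code s]. *)
Fixpoint list_decode_fuel (fuel n : nat) : list nat :=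
  match fuel, n with
  | S fuel, S n => let (a, m) := of_nat n in a :: list_decode_fuel fuel m
  | _, _ => []
  end.

Definition list_decode (n : nat) : list nat := list_decode_fuel n n.

Lemma list_decode_fuel_code s fuel : list_code s <= fuel -> list_decode_fuel fuel (list_code s) = s.
Proof.
  revert fuel. induction s as [|a s IH]; intros [|fuel] Hfuel; cbn [list_code] in *; try lia.
  - reflexivity.
  - reflexivity.
  - cbn [list_decode_fuel]. rewrite cancel_of_to. f_equal. apply IH.
    pose proof (to_nat_non_decreasing a (list_code s)). lia.
Qed.

Lemma list_decode_surjective s : exists n, list_decode n = s.
Proof. exists (list_code s). apply list_decode_fuel_code. lia. Qed.

Lemma filter_full (F : family) : is_filter F -> F (fun _ => True).
Proof. intros [_ [_ Hcof]]. apply Hcof. exists 0. intros m Hm. contradiction (Hm I). Qed.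

Lemma Fplus_meet_filter_beyond (F : family) X Y b :
  is_filter F -> Fplus F X -> F Y -> exists m, b <= m /\ X m /\ Y m.
Proof.
  intros [Hmeet [Hup Hcof]] HX HY. apply NNPP. intros Hno. apply HX.
  apply (Hup (fun m => Y m /\ b <= m)).
  - apply Hmeet; [exact HY|]. apply Hcof. exists b. intros m Hm. unfold compl in Hm. lia.
  - intros m [HYm Hbm] HXm. apply Hno. eauto.
Qed.

Lemma not_almost_sub_witness X Y : ~ almost_sub X Y -> exists m, X m /\ ~ Y m.
Proof.
  intros Hns. apply NNPP. intros Hno. apply Hns. exists 0.
  intros m Hm. contradiction Hno. eauto.
Qed.

Inductive legal_path (R : list nat -> nset) : list nat -> Prop :=
  | legal_nil : legal_path R []
  | legal_snoc s n : legal_path R s -> R s n -> legal_path R (s ++ [n]).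

Lemma legal_path_snoc_inv R s n : legal_path R (s ++ [n]) -> legal_path R s /\ R s n.
Proof.
  intros Hp. inversion Hp as [Hnil|s' n' Hs' Hn' Heq].
  - destruct s; discriminate.
  - apply app_inj_tail in Heq as [-> ->]. auto.
Qed.

Lemma legal_path_is_tree R : is_tree (legal_path R).
Proof.
  split; [constructor|].
  intros s t. induction t as [|t n IH] using rev_ind.
  - rewrite app_nil_r. auto.
  - rewrite app_assoc. intros Hp. apply IH, (legal_path_snoc_inv _ _ _ Hp).
Qed.

Lemma legal_path_branch R f : is_branch (legal_path R) f <-> forall k, R (prefix f k) (f k).
Proof.
  split.
  - intros Hb k. specialize (Hb (S k)). rewrite prefix_S in Hb.
    exact (proj2 (legal_path_snoc_inv _ _ _ Hb)).
  - intros Hf k. induction k as [|k IH]; [constructor|].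
    rewrite prefix_S. constructor; auto.
Qed.

Lemma strategy_tree_is_F_tree (F : family) (sigma : list nat -> nset) :
  (forall s, F (sigma s)) -> is_F_tree F (legal_path sigma).
Proof.
  intros Hsigma. split; [apply legal_path_is_tree|].
  intros s Hs. exists (sigma s). split; [apply Hsigma|]. intros n Hn. constructor; auto.
Qed.

Lemma I_winning_not_weakly_Ramsey (F : family) :
  I_has_winning_strategy F (Fplus F) -> ~ weakly_Ramsey F.
Proof.
  intros [sigma [Hsigma Hwin]] HR.
  destruct (HR _ (strategy_tree_is_F_tree F sigma Hsigma)) as [f [Hb Hf]].
  exact (Hwin f (proj1 (legal_path_branch _ _) Hb) Hf).
Qed.

Lemma F_tree_strategy (F : family) T :
  is_filter F -> is_F_tree F T ->
  exists sigma : list nat -> nset, (forall s, F (sigma s)) /\ forall s, legal_path sigma s -> T s.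
Proof.
  intros HF [[Troot _] Tsucc].
  assert (Hwit : forall s, exists X, F X /\ (T s -> forall n, X n -> T (s ++ [n]))).
  { intros s. destruct (classic (T s)) as [Ts|Ts].
    - destruct (Tsucc s Ts) as [X [HX Hsucc]]. eauto.
    - exists (fun _ => True). split; [apply filter_full, HF|]. contradiction. }
  destruct (functional_choice _ Hwit) as [sigma Hsigma].
  exists sigma. split; [apply Hsigma|].
  intros s Hs. induction Hs as [|s n Hs IH Hn]; [exact Troot|]. apply (Hsigma s); auto.
Qed.

Lemma not_weakly_Ramsey_I_winning (F : family) :
  is_filter F -> ~ weakly_Ramsey F -> I_has_winning_strategy F (Fplus F).
Proof.
  intros HF HnR.
  apply not_all_ex_not in HnR as [T HT]. apply imply_to_and in HT as [HT Hnobranch].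
  destruct (F_tree_strategy F T HF HT) as [sigma [Hsigma HsigmaT]].
  exists sigma. split; [exact Hsigma|]. intros f Hf Hfplus.
  apply Hnobranch. exists f. split; [|exact Hfplus].
  intros k. apply HsigmaT, (proj2 (legal_path_branch _ _) Hf).
Qed.

Lemma Fplus_of_diagonal_hits (F : family) (Xs : nat -> nset) Z :
  (forall Y, F Y -> exists n, almost_sub (Xs n) Y) ->
  (forall n N, exists m, N <= m /\ Xs n m /\ Z m) -> Fplus F Z.
Proof.
  intros Hdiag Hhits HcZ.
  destruct (Hdiag _ HcZ) as [n [N HN]]. destruct (Hhits n N) as [m [HNm [HXm HZm]]].
  specialize (HN m (conj HXm (fun Hc => Hc HZm))). lia.
Qed.

Lemma diagonalizable_II_winning (F : family) :
  is_filter F -> omega_plus_diagonalizable F -> II_has_winning_strategy F (Fplus F).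
Proof.
  intros HF [Xs [HXs Hdiag]].
  (* At stage k = <n, N> II answers inside X_n above N. *)
  assert (Hanswer : forall p : list nset * nset, exists m, F (snd p) ->
            let (n, N) := of_nat (length (fst p)) in N <= m /\ Xs n m /\ snd p m).
  { intros [h X]. simpl. destruct (of_nat (length h)) as [n N].
    destruct (classic (F X)) as [HX|HX].
    - destruct (Fplus_meet_filter_beyond F _ _ N HF (HXs n) HX) as [m Hm]. eauto.
    - exists 0. contradiction. }
  destruct (functional_choice _ Hanswer) as [answer Hanswer_spec].
  exists (fun h X => answer (h, X)). split.
  - intros h X _ HX. specialize (Hanswer_spec (h, X) HX). simpl in Hanswer_spec.
    destruct (of_nat (length h)). tauto.
  - intros Is HIs. apply (Fplus_of_diagonal_hits F Xs _ Hdiag). intros n N.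
    set (k := to_nat (n, N)).
    specialize (Hanswer_spec (prefix Is k, Is k) (HIs k)). simpl in Hanswer_spec.
    rewrite prefix_length in Hanswer_spec.
    unfold k in Hanswer_spec. rewrite cancel_of_to in Hanswer_spec.
    exists (answer (prefix Is k, Is k)). repeat split; try tauto. exists k. reflexivity.
Qed.

Section II_strategy_analysis.

Variables (F : family) (tau : list nset -> nset -> nat).
Hypothesis tau_legal : forall h X, Forall F h -> F X -> X (tau h X).

Definition replies (h : list nset) : nset := fun m => exists X, F X /\ tau h X = m.

Lemma replies_Fplus h : Forall F h -> Fplus F (replies h).
Proof.
  intros Hh Hc. apply (tau_legal h _ Hh Hc). exists (compl (replies h)). auto.
Qed.

Lemma exists_reply_move :
  is_filter F ->
  exists move : list nset -> nat -> nset,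
    (forall h m, F (move h m)) /\ forall h m, replies h m -> tau h (move h m) = m.
Proof.
  intros HF.
  assert (Hmove : forall p : list nset * nat, exists X,
            F X /\ (replies (fst p) (snd p) -> tau (fst p) X = snd p)).
  { intros [h m]. destruct (classic (replies h m)) as [[X HX]|Hno].
    - exists X. simpl. tauto.
    - exists (fun _ => True). split; [apply filter_full, HF|]. contradiction. }
  destruct (functional_choice _ Hmove) as [move Hmove_spec].
  exists (fun h m => move (h, m)). split; intros h m; apply (Hmove_spec (h, m)).
Qed.

Variable move : list nset -> nat -> nset.
Hypothesis move_in_F : forall h m, F (move h m).
Hypothesis move_replies : forall h m, replies h m -> tau h (move h m) = m.

(* The moves of I that, against tau, lead to the answer sequence s. *)
Definition history (s : list nat) : list nset :=
  fold_left (fun h m => h ++ [move h m]) s [].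

Lemma history_snoc s m : history (s ++ [m]) = history s ++ [move (history s) m].
Proof. unfold history. rewrite fold_left_app. reflexivity. Qed.

Lemma history_in_F s : Forall F (history s).
Proof.
  induction s as [|s m IH] using rev_ind; [constructor|].
  rewrite history_snoc. apply Forall_app. auto.
Qed.

Definition play_with_replies (g : nat -> nat) : nat -> nset :=
  fun k => move (history (prefix g k)) (g k).

Lemma play_with_replies_spec (g : nat -> nat) :
  (forall k, replies (history (prefix g k)) (g k)) ->
  forall k, tau (prefix (play_with_replies g) k) (play_with_replies g k) = g k.
Proof.
  intros Hg.
  assert (Hprefix : forall k, prefix (play_with_replies g) k = history (prefix g k)).
  { induction k as [|k IH]; [reflexivity|].
    rewrite !prefix_S, history_snoc, IH. reflexivity. }
  intros k. rewrite Hprefix. apply move_replies, Hg.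
Qed.

End II_strategy_analysis.

Lemma II_winning_diagonalizable (F : family) :
  is_filter F -> II_has_winning_strategy F (Fplus F) -> omega_plus_diagonalizable F.
Proof.
  intros HF [tau [Hlegal Hwin]]. apply NNPP. intros Hnotdiag.
  destruct (exists_reply_move F tau HF) as [move [Hmove_F Hmove_replies]].
  set (Xs := fun n => replies F tau (history move (list_decode n))).
  assert (HY : exists Y, F Y /\ forall s, exists m, replies F tau (history move s) m /\ ~ Y m).
  { apply NNPP. intros Hno. apply Hnotdiag. exists Xs. split.
    - intros n. apply (replies_Fplus F tau Hlegal), (history_in_F F move Hmove_F).
    - intros Y HY. apply NNPP. intros Hnone. apply Hno. exists Y. split; [exact HY|].
      intros s. destruct (list_decode_surjective s) as [n <-].
      apply not_almost_sub_witness. intros Hsub. eauto. }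
  destruct HY as [Y [HY Havoid]].
  destruct (functional_choice _ Havoid) as [c Hc].
  destruct (exists_prefix_recursive c) as [g Hg].
  assert (Hreplies : forall k, replies F tau (history move (prefix g k)) (g k) /\ ~ Y (g k)).
  { intros k. rewrite Hg. apply Hc. }
  pose proof (play_with_replies_spec F tau move Hmove_replies g (fun k => proj1 (Hreplies k)))
    as Hplay.
  apply (Hwin (play_with_replies move g) (fun k => Hmove_F _ _)).
  destruct HF as [_ [Hup _]]. apply (Hup _ _ HY). intros m Hm [k Hk].
  rewrite Hplay in Hk. subst m. exact (proj2 (Hreplies k) Hm).
Qed.

Theorem theorem2p7 (F : family) :
  proper_filter F ->
  (I_has_winning_strategy F (Fplus F) <-> ~ weakly_Ramsey F) /\
  (II_has_winning_strategy F (Fplus F) <-> omega_plus_diagonalizable F).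
Proof.
  intros [HF _]. split; split.
  - apply I_winning_not_weakly_Ramsey.
  - apply not_weakly_Ramsey_I_winning, HF.
  - apply II_winning_diagonalizable, HF.
  - apply diagonalizable_II_winning, HF.
Qed.
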